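(* Let $\mathbb{F}$ be an infinite field and let $k,l,m,n>1$ be integers. Let $\mathcal{F}$ be a flag of length $3$ in $\mathbb{F}^{k+l+1}$ with signature $(k,1,l)$ and $\mathcal{F}'$ a flag of length $3$ in $\mathbb{F}^{m+n+1}$ with signature $(m,1,n)$. Then the semigroups $\varphi(\mathcal{F})\subseteq M(k+l+1,\mathbb{F})$ and $\varphi(\mathcal{F}')\subseteq M(m+n+1,\mathbb{F})$ are isomorphic.
   Context: $M(N,\mathbb{F})$ is the semigroup of $N\times N$ matrices over $\mathbb{F}$, identified with linear operators on $\mathbb{F}^N$. A flag in $\mathbb{F}^N$ of length $r$ is a chain $0=V_0\subsetneq V_1\subsetneq\cdots\subsetneq V_r=\mathbb{F}^N$ of subspaces, with signature $(d_1,\dots,d_r)$, $d_i=\dim(V_i/V_{i-1})$. For such a flag, $\varphi(\mathcal{F})=\{a\in M(N,\mathbb{F}) : a(V_i)\subseteq V_{i-1}\text{ for all } i\}$. *)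

From HB Require Import structures.
From mathcomp Require Import all_boot all_order all_algebra.
Set Implicit Arguments. Unset Strict Implicit. Unset Printing Implicit Defensive.
Import GRing.Theory.
Local Open Scope ring_scope.

Definition infinite_field (F : fieldType) : Prop :=
  forall s : seq F, exists x : F, x \notin s.

(* Subspaces of F^N are represented (mxalgebra style) by square matrices
   'M[F]_N through their row spaces.  A flag of length r is a sequence
   [:: V_0; V_1; ...; V_r] with V_0 = 0, V_r = F^N and V_(i-1) < V_i
   (strict inclusion). *)
Definition is_flag (F : fieldType) (N : nat) (V : seq 'M[F]_N) : Prop :=
  [/\ (0 < size V)%N,
      (nth 0 V 0 == (0 : 'M[F]_N))%MS,
      (nth 0 V (size V).-1 == 1%:M)%MS &
      forall i, (i.+1 < size V)%N -> (nth 0 V i < nth 0 V i.+1)%MS].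

Definition flag_signature (F : fieldType) (N : nat) (V : seq 'M[F]_N) : seq nat :=
  [seq (\rank (nth (0 : 'M[F]_N)%R V i.+1) - \rank (nth (0 : 'M[F]_N)%R V i))%N
  | i <- iota 0 (size V).-1].

(* A matrix a acts on column vectors x |-> a *m x; the image of the
   subspace with row space V is therefore the row space of V *m a^T.
   With this convention the matrix product a *m b is the composition a o b. *)
Definition phi (F : fieldType) (N : nat) (V : seq 'M[F]_N) : 'M[F]_N -> Prop :=
  fun a => forall i, (0 < i < size V)%N ->
    (nth 0 V i *m a^T <= nth 0 V i.-1)%MS.

Definition semigroup_iso (F : fieldType) (N1 N2 : nat)
    (S : 'M[F]_N1 -> Prop) (S' : 'M[F]_N2 -> Prop) : Prop :=
  exists f : 'M[F]_N1 -> 'M[F]_N2,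
    [/\ forall a, S a -> S' (f a),
        forall a b, S a -> S b -> f a = f b -> a = b,
        forall c, S' c -> exists2 a, S a & f a = c &
        forall a b, S a -> S b -> f (a *m b) = f a *m f b].

From HB Require Import structures.
From mathcomp Require Import all_boot all_order all_algebra.
From mathcomp Require Import boolp classical_sets functions cardinality.
From mathcomp Require Import ring zify.

(* In a basis adapted to a flag of signature (k, 1, l), an element of phi is a triple
   (x, y, A) with x a column of size k, y a row of size l and A a k x l block, and the
   product is (x, y, A) (x', y', A') = (0, 0, x y').  Given bijections g and h between
   the column (resp. row) spaces that commute with scalars, and a bijection beta between
   the matrices of rank at least 2, the map (x, y, A) |-> (g x, h y, Psi A), where
   Psi (x y) = g x h y on rank-one matrices and Psi = beta elsewhere, is an isomorphism.
   The bijections exist because, F being infinite, |F * F| = |F| (Hessenberg's theorem),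
   so projective spaces and sets of matrices of rank >= 2 all have the cardinality of F,
   and Cantor-Bernstein applies. *)

Set Implicit Arguments. Unset Strict Implicit. Unset Printing Implicit Defensive.
Import GRing.Theory.
Local Open Scope classical_set_scope.
Local Open Scope card_scope.

(** * Cardinal comparisons *)

Lemma set_inj_card_le T U (A : set T) (B : set U) (f : T -> U) :
  set_fun A B f -> set_inj A f -> A #<= B.
Proof.
move=> fAB finj; have [g] : $|{injfun A >-> B}| by apply/injfunPex; exists f.
exact: inj_card_le.
Qed.

Lemma card_le_set_inj T U (A : set T) (B : set U) (u0 : U) :
  A #<= B -> exists2 f, set_fun A B f & set_inj A f.
Proof. by move/card_leP=> [f]; apply/injfunPex; squash (valLR u0 f). Qed.

Lemma card_eq_set_bij T U (A : set T) (B : set U) (u0 : U) :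
  A #= B -> exists f, set_bij A B f.
Proof. by move/card_eqP=> [f]; apply/bijPex; squash (valLR u0 f). Qed.

Lemma card_eq_inverse T U (A : set T) (B : set U) (t0 : T) (u0 : U) : A #= B ->
  exists f g, [/\ set_fun A B f, set_fun B A g, {in A, cancel f g} & {in B, cancel g f}].
Proof.
move=> /(card_eq_set_bij u0) [f fbij]; exists f, ('pinv_(fun=> t0) A f); split.
- exact: set_bij_homo fbij.
- exact: set_bij_homo (bijpinv_bij _ fbij).
- exact: pinvKV (set_bij_inj fbij).
- exact: surjpK (set_bij_surj fbij).
Qed.

Lemma card_le_setX T U (A : set T) (B : set U) : A #<= B -> A `*` A #<= B `*` B.
Proof.
elim/Ppointed: U => U in B *.
  by rewrite (empty_eq0 B) => /card_le0P ->; rewrite set0X; exact: card_ge0.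
case/(card_le_set_inj point) => f fAB finj.
apply: (@set_inj_card_le _ _ _ _ (fun p => (f p.1, f p.2))) => [[x y] [/= /fAB ? /fAB ?] //|].
move=> [x y] [x' y'] /set_mem [/= Ax Ay] /set_mem [/= Ax' Ay'] [/finj Ex /finj Ey].
by rewrite (Ex (mem_set Ax) (mem_set Ax')) (Ey (mem_set Ay) (mem_set Ay')).
Qed.

(* X `|` C embeds in X `*` X, using the two points a and b as tags. *)
Lemma card_le_setU T (X C : set T) (a b : T) : X a -> X b -> a <> b ->
  X `*` X #<= X -> C #<= X -> X `|` C #<= X.
Proof.
move=> Xa Xb ab XX /(card_le_set_inj a) [j jCX jinj].
apply: card_le_trans XX.
pose e x := if pselect (X x) then (x, a) else (j x, b).
apply: (@set_inj_card_le _ _ _ _ e) => [x XCx|x y /set_mem XCx /set_mem XCy]; rewrite /e.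
  case: pselect => [Xx|nXx]; first by split.
  by case: XCx => // Cx; split; [exact: jCX|].
case: pselect => [Xx|nXx]; case: pselect => [Xy|nXy] [].
- by [].
- by move=> _ /ab.
- by move=> _ /esym/ab.
move=> jxy; apply: jinj jxy; apply: mem_set.
  by case: XCx.
by case: XCy.
Qed.

Section PartialInjection.
Variables (T U : Type) (A : set T) (B : set U).

Definition partial_injection (R : set (T * U)) :=
  [/\ R `<=` A `*` B, forall x y y', R (x, y) -> R (x, y') -> y = y'
    & forall x x' y, R (x, y) -> R (x', y) -> x = x'].

Lemma partial_injection_maximal :
  exists R, partial_injection R /\ forall R', R `<` R' -> ~ partial_injection R'.
Proof.
apply: Zorn_bigcup => Rs Rs_inj Rs_chain; split.
- by move=> p [R /Rs_inj [+ _ _] Rp]; apply.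
- move=> x y y' [R1 /[dup] R1s /Rs_inj [_ f1 _] R1xy] [R2 /[dup] R2s /Rs_inj [_ f2 _] R2xy'].
  have [/(_ _ R1xy) R2xy|/(_ _ R2xy') R1xy'] := Rs_chain _ _ R1s R2s.
    exact: f2 R2xy R2xy'.
  exact: f1 R1xy R1xy'.
- move=> x x' y [R1 /[dup] R1s /Rs_inj [_ _ i1] R1xy] [R2 /[dup] R2s /Rs_inj [_ _ i2] R2x'y].
  have [/(_ _ R1xy) R2xy|/(_ _ R2x'y) R1x'y] := Rs_chain _ _ R1s R2s.
    exact: i2 R2xy R2x'y.
  exact: i1 R1xy R1x'y.
Qed.

Lemma partial_injection_card_le R (u0 : U) : partial_injection R ->
  (forall x, A x -> exists y, R (x, y)) -> A #<= B.
Proof.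
move=> [RAB _ Ri] RA; have /choice [f Rf] : forall x, exists y, A x -> R (x, y).
  by move=> x; have [/RA [y]|] := pselect (A x); [exists y | exists u0].
apply: (@set_inj_card_le _ _ _ _ f) => [x /Rf /RAB [] //|x x' /set_mem Ax /set_mem Ax' fxx'].
by apply: Ri (Rf _ Ax) _; rewrite fxx'; exact: Rf.
Qed.

End PartialInjection.

Lemma card_le_total T U (A : set T) (B : set U) : A #<= B \/ B #<= A.
Proof.
have [->|/set0P [t0 _]] := eqVneq A set0; first by left; exact: card_ge0.
have [->|/set0P [u0 _]] := eqVneq B set0; first by right; exact: card_ge0.
have [R [/[dup] Rpinj [RAB Rf Ri] Rmax]] := partial_injection_maximal A B.
have [RA|/existsNP [x0 /not_implyP [Ax0 /forallNP nRx]]] :=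
  pselect (forall x, A x -> exists y, R (x, y)).
  by left; exact: partial_injection_card_le u0 Rpinj RA.
have [RB|/existsNP [y0 /not_implyP [By0 /forallNP nRy]]] :=
  pselect (forall y, B y -> exists x, R (x, y)).
  right; apply: (@partial_injection_card_le _ _ _ _ [set p | R (p.2, p.1)] t0).
    by split=> [[y x] /RAB [] | y x x' /Ri E /E | y y' x /Rf E /E].
  by move=> y /RB [x Rxy]; exists x.
exfalso; apply: (Rmax (R `|` [set (x0, y0)])).
  split; first exact: subsetUl.
  by move=> /(_ (x0, y0) (or_intror erefl)) /nRx.
split.
- by move=> p [/RAB //|->].
- move=> a b b' [Rab|E] [Rab'|E']; first exact: Rf Rab Rab'.
  + by move: E' Rab => [-> _] /nRx.
  + by move: E Rab' => [-> _] /nRx.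
  + by move: E E' => [_ ->] [_ ->].
- move=> a a' b [Rab|E] [Rab'|E']; first exact: Ri Rab Rab'.
  + by move: E' Rab => [_ ->] /nRy.
  + by move: E Rab' => [_ ->] /nRy.
  + by move: E E' => [-> _] [-> _].
Qed.

(** * Hessenberg's theorem *)

Section Hessenberg.
Variables (T : Type) (u : nat -> T).
Hypothesis u_inj : injective u.
Implicit Types (G : set ((T * T) * T)) (R B : set T).

Definition graph_range G : set T := [set z | exists p, G (p, z)].

(* [G] is the graph of a bijection from [R `*` R] onto its range [R]. *)
Definition self_pairing G :=
  [/\ forall p z z', G (p, z) -> G (p, z') -> z = z',
      forall p p' z, G (p, z) -> G (p', z) -> p = p',
      forall p, (exists z, G (p, z)) <-> (graph_range G `*` graph_range G) p
    & range u `<=` graph_range G].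

Definition new_pairs R B : set (T * T) := (R `|` B) `*` (R `|` B) `\` R `*` R.

Lemma self_pairing_card G : self_pairing G ->
  graph_range G `*` graph_range G #<= graph_range G.
Proof.
case=> _ Ginj Gdom _.
have /choice [f Gf] :
    forall p, exists z, (graph_range G `*` graph_range G) p -> G (p, z).
  move=> p; have [/(Gdom p).2 [z Gz]|nRR] := pselect ((graph_range G `*` graph_range G) p).
    by exists z.
  by exists (u 0).
apply: (@set_inj_card_le _ _ _ _ f) => [p /Gf Gp|p q /set_mem /Gf Gp /set_mem /Gf Gq fpq].
  by exists p.
by apply: Ginj Gp _; rewrite fpq.
Qed.

Lemma self_pairing_nat : exists2 G, self_pairing G & G !=set0.
Proof.
have [pr [_ pr_inj pr_surj]] := card_eq_set_bij 0%N card_nat2.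
pose G q := exists a b, q = ((u a, u b), u (pr (a, b))).
have rangeG : graph_range G = range u.
  apply/seteqP; split => [z [p [a [b [_ ->]]]]|z [n _ <-]]; first exact: imageT.
  by have [[a b] _ <-] := pr_surj n I; exists (u a, u b), a, b.
exists G; last by exists ((u 0, u 0), u (pr (0, 0)))%N, 0%N, 0%N.
rewrite /self_pairing rangeG; split.
- move=> p z z' [a [b [-> ->]]] [a' [b' [[/u_inj -> /u_inj ->] ->]]] //.
- move=> p p' z [a [b [-> ->]]] [a' [b' [-> /u_inj /pr_inj]]].
  by move=> /(_ (mem_set I) (mem_set I)) [-> ->].
- move=> [x y]; split => [[z [a [b [[-> ->] _]]]]|[/= [a _ <-] [b _ <-]]].
    by split; exact: imageT.
  by exists (u (pr (a, b))), a, b.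
- by [].
Qed.

Lemma self_pairing_bigcup (Gs : set (set ((T * T) * T))) :
  Gs `<=` self_pairing -> total_on Gs subset -> Gs !=set0 ->
  self_pairing (\bigcup_(G in Gs) G).
Proof.
move=> Gs_pair Gs_chain [G0 Gs0].
have rangeU z :
    graph_range (\bigcup_(G in Gs) G) z <-> exists2 G, Gs G & graph_range G z.
  split => [[p [G GsG Gpz]]|[G GsG [p Gpz]]]; first by exists G => //; exists p.
  by exists p, G.
have common G1 G2 : Gs G1 -> Gs G2 -> exists2 G, Gs G & G1 `<=` G /\ G2 `<=` G.
  move=> Gs1 Gs2; have [S12|S21] := Gs_chain _ _ Gs1 Gs2.
    by exists G2 => //; split.
  by exists G1 => //; split.
split.
- move=> p z z' [G1 Gs1 G1z] [G2 Gs2 G2z].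
  have [G GsG [S1 S2]] := common _ _ Gs1 Gs2.
  by have [Gfun _ _ _] := Gs_pair _ GsG; apply: Gfun (S1 _ G1z) (S2 _ G2z).
- move=> p p' z [G1 Gs1 G1z] [G2 Gs2 G2z].
  have [G GsG [S1 S2]] := common _ _ Gs1 Gs2.
  by have [_ Ginj _ _] := Gs_pair _ GsG; apply: Ginj (S1 _ G1z) (S2 _ G2z).
- move=> [x y]; split.
    move=> [z [G GsG Gz]].
    have [_ _ Gdom _] := Gs_pair _ GsG.
    have [Gx Gy] := (Gdom (x, y)).1 (ex_intro _ z Gz).
    by split; apply/rangeU; exists G.
  case=> /rangeU [G1 Gs1 [p1 G1x]] /rangeU [G2 Gs2 [p2 G2y]].
  have [G GsG [S1 S2]] := common _ _ Gs1 Gs2.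
  have [_ _ Gdom _] := Gs_pair _ GsG.
  have [|z Gz] := (Gdom (x, y)).2.
    by split; [exists p1; exact: S1 | exists p2; exact: S2].
  by exists z, G.
- have [_ _ _ G0u] := Gs_pair _ Gs0.
  by move=> z /G0u G0z; apply/rangeU; exists G0.
Qed.

Lemma self_pairing_adjoin G B (h : T * T -> T) : self_pairing G -> B !=set0 ->
  (forall z, B z -> ~ graph_range G z) -> set_bij (new_pairs (graph_range G) B) B h ->
  exists2 G', G `<` G' & self_pairing G'.
Proof.
move=> [Gfun Ginj Gdom Gu] [b Bb] BnR [hDB hinj hsurj].
set R := graph_range G in Gdom Gu BnR hDB hinj hsurj *.
set D := new_pairs R B in hDB hinj hsurj.
have GRR p z : G (p, z) -> (R `*` R) p by move=> Gz; apply/Gdom; exists z.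
have Dn q : D q -> ~ (R `*` R) q by case.
pose G' : set ((T * T) * T) := fun q => G q \/ D q.1 /\ q.2 = h q.1.
have rangeG' : graph_range G' = R `|` B.
  apply/seteqP; split=> z.
    by case=> p [Gpz|[/= Dp ->]]; [left; exists p | right; exact: hDB].
  case=> [[p Gpz]|/hsurj [q Dq <-]]; first by exists p; left.
  by exists q; right.
exists G'; last split.
- split; first exact: subsetUl.
  have Dbb : D (b, b) by split; [split; right | case=> /BnR].
  move=> /(_ ((b, b), h (b, b)) (or_intror (conj Dbb erefl))) /GRR.
  exact: Dn.
- move=> p z z' [Gz|[/= Dp ->]] [Gz'|[/= Dp' ->]] //.
  + exact: Gfun Gz Gz'.
  + by case: (Dn _ Dp'); exact: GRR Gz.
  + by case: (Dn _ Dp); exact: GRR Gz'.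
- move=> p p' z [Gz|[/= Dp Ez]] [Gz'|[/= Dp' Ez']].
  + exact: Ginj Gz Gz'.
  + by case: (BnR (h p')); [exact: hDB | rewrite -Ez'; exists p].
  + by case: (BnR (h p)); [exact: hDB | rewrite -Ez; exists p'].
  + by apply: hinj; [exact: mem_set | exact: mem_set | rewrite -Ez -Ez'].
- move=> p; rewrite rangeG'; split.
    case=> z [/GRR [Rx Ry]|[Dp _]]; [by split; left | by case: Dp].
  have [/(Gdom p).2 [z Gz] _|nRR A'p] := pselect ((R `*` R) p).
    by exists z; left.
  by exists (h p); right.
- by rewrite rangeG' => z /Gu Rz; left.
Qed.

(* [R `|` B] injects into [R], hence the new pairs inject into [R `*` R], hence into [B]. *)
Lemma self_pairing_extend G : self_pairing G ->
  graph_range G #<= ~` graph_range G -> exists2 G', G `<` G' & self_pairing G'.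
Proof.
move=> /[dup] Gpair [_ _ _ Gu] /(card_le_set_inj (u 0)) [j jR jinj].
set R := graph_range G in Gpair Gu jR jinj *.
pose B := j @` R.
have BnR z : B z -> ~ R z by move=> [x Rx <-]; exact: jR.
have RR := self_pairing_card Gpair.
have RBR : R `|` B #<= R.
  apply: card_le_setU (Gu _ (imageT u 0)) (Gu _ (imageT u 1)) _ RR _.
    by move/u_inj.
  exact: card_image_le.
have DB : new_pairs R B #= B.
  apply: Cantor_Bernstein.
    apply: card_le_trans (subset_card_le (@subDsetl _ _ _)) _.
    apply: card_le_trans (card_le_setX RBR) _; apply: card_le_trans RR _.
    by have := inj_card_eq jinj; rewrite card_eq_sym card_eq_le => /andP [].
  apply: (@set_inj_card_le _ _ _ _ (fun z => (z, z))) => [z Bz|z z' _ _ [] //].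
  by split; [split; right | case=> /= /BnR].
have [h hbij] := card_eq_set_bij (u 0) DB.
apply: self_pairing_adjoin Gpair _ BnR hbij.
by exists (j (u 0)), (u 0); first exact: Gu (imageT _ _).
Qed.

Lemma self_pairing_maximal :
  exists G, self_pairing G /\ forall G', G `<` G' -> ~ self_pairing G'.
Proof.
(* The empty graph is admitted only so that the union of the empty chain qualifies. *)
have [G [PG Gmax]] : exists G, (G = set0 \/ self_pairing G) /\
    forall G', G `<` G' -> ~ (G' = set0 \/ self_pairing G').
  apply: Zorn_bigcup => Gs Gs_P Gs_chain.
  have [Gs0|/existsNP [G0 /not_implyP [GsG0 /eqP/set0P G0n0]]] :=
    pselect (forall G, Gs G -> G = set0).
    by left; apply/seteqP; split => // q [G /Gs0 ->].
  have pairing_member G : Gs G -> G !=set0 -> self_pairing G.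
    by move=> /Gs_P [->|//] /set0P /eqP.
  right; have -> : \bigcup_(G in Gs) G = \bigcup_(G in Gs `&` self_pairing) G.
    apply/seteqP; split => q [G GsG Gq]; last by exists G => //; case: GsG.
    by exists G => //; split => //; apply: pairing_member => //; exists q.
  apply: self_pairing_bigcup; first by move=> G [].
    by move=> G1 G2 [Gs1 _] [Gs2 _]; exact: Gs_chain.
  by exists G0; split => //; exact: pairing_member.
have [G0 G0pair [q G0q]] := self_pairing_nat.
case: PG => [G0_|Gpair].
  by case: (Gmax G0); [rewrite G0_; split => // /(_ _ G0q) | right].
by exists G; split => // G' /Gmax GG' G'pair; apply: GG'; right.
Qed.

(* A maximal self-pairing cannot be extended, so by comparability its range R absorbs
   the complement of R: T injects into R. *)
Theorem card_setXT_le : [set: T * T] #<= [set: T].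
Proof.
have [G [Gpair Gmax]] := self_pairing_maximal.
set R := graph_range G.
have [RnR|nRR] := card_le_total R (~` R).
  by have [G' /Gmax] := self_pairing_extend Gpair RnR.
have [_ _ _ Gu] := Gpair.
have TR : [set: T] #<= R.
  rewrite -(setUv R).
  apply: card_le_setU (Gu _ (imageT u 0)) (Gu _ (imageT u 1)) _ (self_pairing_card Gpair) nRR.
  by move/u_inj.
rewrite -setXTT; apply: card_le_trans (card_le_setX TR) _.
apply: card_le_trans (self_pairing_card Gpair) _.
exact: card_leT.
Qed.

End Hessenberg.

Local Open Scope ring_scope.

(** * Normalized matrices and outer products *)

Section Normalization.
Variables (F : fieldType) (a b : nat).
Implicit Types (M : 'M[F]_(a, b)) (c : F).

Definition mxlead M : F :=
  if [pick ij | M ij.1 ij.2 != 0] is Some ij then M ij.1 ij.2 else 0.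

Definition mxnormalize M := (mxlead M)^-1 *: M.

Definition normalized_mx : set 'M[F]_(a, b) := [set M | M != 0 /\ mxlead M = 1].

Lemma mxlead_eq0 M : (mxlead M == 0) = (M == 0).
Proof.
rewrite /mxlead; case: pickP => [ij /= Mij | M0].
  by apply/idP/idP => /eqP M0; [rewrite M0 eqxx in Mij | rewrite M0 mxE eqxx in Mij].
rewrite eqxx; apply/esym/eqP/matrixP => i j; rewrite mxE.
by have /= /negbFE/eqP := M0 (i, j).
Qed.

Lemma mxleadZ c M : mxlead (c *: M) = c * mxlead M.
Proof.
have [->|c0] := eqVneq c 0.
  by rewrite scale0r mul0r; apply/eqP; rewrite mxlead_eq0.
rewrite /mxlead (@eq_pick _ _ (fun ij : 'I_a * 'I_b => M ij.1 ij.2 != 0)).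
  by case: pickP => [ij _|_]; rewrite ?mxE ?mulr0.
by move=> ij /=; rewrite mxE mulf_eq0 negb_or c0.
Qed.

Lemma mxnormalizeK M : mxlead M *: mxnormalize M = M.
Proof.
have [->|M0] := eqVneq M 0; first by rewrite /mxnormalize !scaler0.
by rewrite /mxnormalize scalerA divff ?scale1r // mxlead_eq0.
Qed.

Lemma mxnormalize_normalized M : M != 0 -> normalized_mx (mxnormalize M).
Proof.
move=> M0; have l0 : mxlead M != 0 by rewrite mxlead_eq0.
split; last by rewrite /mxnormalize mxleadZ mulVf.
by rewrite /mxnormalize scaler_eq0 negb_or M0 invr_eq0 l0.
Qed.

Lemma mxnormalize_id M : normalized_mx M -> mxnormalize M = M.
Proof. by case=> _ l1; rewrite /mxnormalize l1 invr1 scale1r. Qed.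

Lemma mxnormalizeZ c M : c != 0 -> mxnormalize (c *: M) = mxnormalize M.
Proof.
move=> c0; have [->|M0] := eqVneq M 0; first by rewrite scaler0.
have l0 : mxlead M != 0 by rewrite mxlead_eq0.
by rewrite /mxnormalize mxleadZ scalerA invfM mulrAC mulVf ?mul1r.
Qed.

End Normalization.
Arguments normalized_mx {F a b}.

Section Homogenize.
Variable F : fieldType.

(* Normalized matrices are the points of projective space; a bijection between two
   projective spaces extends to a bijection commuting with scalars. *)
Definition homogenize a b a' b' (g : 'M[F]_(a, b) -> 'M[F]_(a', b')) M :=
  mxlead M *: g (mxnormalize M).

Lemma homogenize_scalable a b a' b' (g : 'M[F]_(a, b) -> 'M[F]_(a', b')) :
  scalable (homogenize g).
Proof.
move=> c M; have [->|c0] := eqVneq c 0.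
  have l0 : mxlead (0 : 'M[F]_(a, b)) = 0 by apply/eqP; rewrite mxlead_eq0.
  by rewrite /homogenize !scale0r l0 scale0r.
by rewrite /homogenize mxleadZ mxnormalizeZ // scalerA.
Qed.

Lemma homogenizeK a b a' b' (g : 'M[F]_(a, b) -> 'M[F]_(a', b')) g' :
  {homo g : M / normalized_mx M >-> normalized_mx M} ->
  {in normalized_mx, cancel g g'} -> cancel (homogenize g) (homogenize g').
Proof.
move=> gN gK M; have [->|M0] := eqVneq M 0.
  by rewrite -[0](scale0r 0) !homogenize_scalable !scale0r.
have [gM0 gM1] := gN _ (mxnormalize_normalized M0).
have l0 : mxlead M != 0 by rewrite mxlead_eq0.
rewrite {1}/homogenize /homogenize mxleadZ gM1 mulr1 mxnormalizeZ //.
by rewrite mxnormalize_id // gK ?mxnormalizeK // inE; exact: mxnormalize_normalized.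
Qed.

End Homogenize.

Section Outer.
Variable F : fieldType.

Definition outer_product k l (M : 'M[F]_(k, l)) :=
  exists (x : 'M[F]_(k, 1)) (y : 'M[F]_(1, l)), M = x *m y.

Lemma outer_mxE k l (x : 'M[F]_(k, 1)) (y : 'M[F]_(1, l)) i j :
  (x *m y) i j = x i 0 * y 0 j.
Proof. by rewrite mxE big_ord1. Qed.

Lemma outer_eq0 k l (x : 'M[F]_(k, 1)) (y : 'M[F]_(1, l)) :
  x *m y = 0 -> x = 0 \/ y = 0.
Proof.
move=> xy0; have [->|/matrix0Pn [i [i' xi]]] := eqVneq x 0; first by left.
have [->|/matrix0Pn [j' [j yj]]] := eqVneq y 0; first by right.
move: xi yj; rewrite (ord1 i') (ord1 j') => xi yj.
have := congr1 (fun M : 'M[F]_(k, l) => M i j) xy0; rewrite /= outer_mxE mxE => /eqP.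
by rewrite mulf_eq0 (negbTE xi) (negbTE yj).
Qed.

End Outer.

Section OuterExtension.
Variable F : fieldType.

Lemma scalable0 (U V : lmodType F) (f : U -> V) : scalable f -> f 0 = 0.
Proof. by move=> fZ; rewrite -(scale0r 0) fZ !scale0r. Qed.

Lemma scalable_outer_congr k l m n (g : 'M[F]_(k, 1) -> 'M[F]_(m, 1))
    (h : 'M[F]_(1, l) -> 'M[F]_(1, n)) : scalable g -> scalable h ->
  forall x y x' y', x *m y = x' *m y' -> g x *m h y = g x' *m h y'.
Proof.
move=> gZ hZ.
have outer0 x y : x *m y = 0 -> g x *m h y = 0.
  by case/outer_eq0 => ->; rewrite (scalable0 gZ, scalable0 hZ) (mul0mx, mulmx0).
move=> x y x' y' E; have [xy0|/matrix0Pn [i [j]]] := eqVneq (x *m y) 0.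
  by rewrite (outer0 _ _ xy0) (outer0 x' y') // -E.
rewrite outer_mxE mulf_eq0 negb_or => /andP [xi yj].
have Eij i0 j0 : x' i0 0 * y' 0 j0 = x i0 0 * y 0 j0.
  by have := congr1 (fun M : 'M[F]_(k, l) => M i0 j0) E; rewrite /= !outer_mxE.
have y'j : y' 0 j != 0.
  by apply: contraNneq (mulf_neq0 xi yj) => y'j0; rewrite -Eij y'j0 mulr0.
pose c := y 0 j / y' 0 j.
have Ex : x' = c *: x.
  apply/matrixP => i0 j0; rewrite (ord1 j0) mxE.
  by apply: (mulIf y'j); rewrite Eij /c; field.
have Ey : y = c *: y'.
  apply/matrixP => i0 j0; rewrite (ord1 i0) mxE.
  apply: (mulfI xi); have := Eij i j0; rewrite Ex mxE => <-.
  by rewrite mulrCA mulrA.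
by rewrite Ex gZ -scalemxAl scalemxAr -hZ -Ey.
Qed.

Definition outer_factors k l (M : 'M[F]_(k, l)) : 'M[F]_(k, 1) * 'M[F]_(1, l) :=
  xget (0, 0) [set xy | M = xy.1 *m xy.2].

Lemma outer_factorsK k l (M : 'M[F]_(k, l)) :
  outer_product M -> M = (outer_factors M).1 *m (outer_factors M).2.
Proof.
by case=> x [y Mxy]; apply: (@xgetPex _ _ [set xy | M = xy.1 *m xy.2]); exists (x, y).
Qed.

Definition outer_extend k l m n (g : 'M[F]_(k, 1) -> 'M[F]_(m, 1))
    (h : 'M[F]_(1, l) -> 'M[F]_(1, n)) (beta : 'M[F]_(k, l) -> 'M[F]_(m, n)) M :=
  if pselect (outer_product M) then g (outer_factors M).1 *m h (outer_factors M).2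
  else beta M.

Lemma outer_extendM k l m n g h beta : scalable g -> scalable h ->
  forall x y, @outer_extend k l m n g h beta (x *m y) = g x *m h y.
Proof.
move=> gZ hZ x y; rewrite /outer_extend; case: pselect => [xy|[]]; last by exists x, y.
by apply: scalable_outer_congr; rewrite // -outer_factorsK.
Qed.

Lemma outer_extend_non_outer k l m n g h beta (M : 'M[F]_(k, l)) :
  ~ outer_product M -> @outer_extend k l m n g h beta M = beta M.
Proof. by rewrite /outer_extend; case: pselect. Qed.

Lemma outer_extendK k l m n g h beta g' h' beta' :
  scalable g -> scalable h -> scalable g' -> scalable h' ->
  cancel g g' -> cancel h h' ->
  {homo beta : M / ~ outer_product M} -> {in [set M | ~ outer_product M], cancel beta beta'} ->
  cancel (@outer_extend k l m n g h beta) (outer_extend g' h' beta').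
Proof.
move=> gZ hZ g'Z h'Z gK hK beta_non betaK M.
have [[x [y ->]]|nM] := pselect (outer_product M).
  by rewrite !outer_extendM // gK hK.
rewrite !outer_extend_non_outer ?betaK ?inE //.
exact: beta_non.
Qed.

End OuterExtension.

(** * The semigroup of triples *)

Section Triples.
Variables (F : fieldType) (k l : nat).
Local Notation N := (k + l + 1)%N.

Definition triple := ('M[F]_(k, 1) * 'M[F]_(1, l) * 'M[F]_(k, l))%type.

Definition triple_mul (s t : triple) : triple := (0, 0, s.1.1 *m t.1.2).

(* The transpose of an element of phi, written in a row basis (B1, B3, e) adapted to
   the flag, kills B1, maps e into <B1> and B3 into <B1, e>; [t = (x, y, A)] lists its
   nonzero blocks. *)
Definition triple_mx (t : triple) : 'M[F]_N :=
  col_mx (col_mx 0 (row_mx (row_mx t.2^T 0) t.1.2^T)) (row_mx (row_mx t.1.1^T 0) 0).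

Lemma triple_mxM s t : triple_mx t *m triple_mx s = triple_mx (triple_mul s t).
Proof.
rewrite /triple_mx /triple_mul /= !mul_col_mx !mul0mx !mul_row_col.
by rewrite !mulmx0 !mul0mx !add0r ?addr0 !mul_mx_row !mulmx0 !trmx0 !row_mx0 trmx_mul.
Qed.

Lemma triple_mx_inj : injective triple_mx.
Proof.
move=> [[x y] A] [[x' y'] A']; rewrite /triple_mx /=.
case/eq_col_mx=> /eq_col_mx [_ /eq_row_mx [/eq_row_mx [/trmx_inj -> _] /trmx_inj ->]].
by case/eq_row_mx=> /eq_row_mx [/trmx_inj -> _].
Qed.

Definition flag_coord (P : 'M[F]_N) (t : triple) : 'M[F]_N :=
  (invmx P *m triple_mx t *m P)^T.

Lemma flag_coordM P s t : P \in unitmx ->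
  flag_coord P s *m flag_coord P t = flag_coord P (triple_mul s t).
Proof.
move=> uP; rewrite /flag_coord -trmx_mul -triple_mxM.
by rewrite !mulmxA mulmxK.
Qed.

Lemma flag_coord_inj P : P \in unitmx -> injective (flag_coord P).
Proof.
move=> uP s t /trmx_inj /(can_inj (mulmxK uP)) /(congr1 (mulmx P)).
by rewrite !mulKVmx // => /triple_mx_inj.
Qed.

End Triples.

(** * Cardinalities over an infinite field *)

Section InfiniteField.
Variables (F : fieldType) (HF : infinite_field F).

Lemma infinite_field_nat : exists u : nat -> F, injective u.
Proof.
have /choice [fresh fresh_notin] : forall s : seq F, exists x, x \notin s := HF.
pose s := fix s n := if n is n.+1 then fresh (s n) :: s n else [::].
have fresh_in m n : (m < n)%N -> fresh (s m) \in s n.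
  elim: n => // n IH; rewrite ltnS leq_eqVlt => /predU1P [->|/IH smn].
    by rewrite in_cons eqxx.
  by rewrite in_cons smn orbT.
exists (fun n => fresh (s n)) => m n E.
case: (ltngtP m n) => // mn.
  by have := fresh_in _ _ mn; rewrite E (negbTE (fresh_notin _)).
by have := fresh_in _ _ mn; rewrite -E (negbTE (fresh_notin _)).
Qed.

Lemma card_matrix_le a b : [set: 'M[F]_(a, b)] #<= [set: F].
Proof.
have [u u_inj] := infinite_field_nat.
have [pi _ pi_inj] := card_le_set_inj 0 (card_setXT_le u_inj).
pose enc (s : seq F) := foldr (fun x acc => pi (x, acc)) 0 s.
have enc_inj s s' : size s = size s' -> enc s = enc s' -> s = s'.
  elim: s s' => [|x s IH] [|x' s'] //= [/IH enc_s] /pi_inj.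
  by move=> /(_ (mem_set I) (mem_set I)) [-> /enc_s ->].
apply: (@set_inj_card_le _ _ _ _ (fun M : 'M[F]_(a, b) =>
  enc [seq M ij.1 ij.2 | ij <- enum {: 'I_a * 'I_b}])) => // M M' _ _.
move=> /enc_inj; rewrite !size_map => /(_ erefl) /eq_in_map E.
by apply/matrixP => i j; exact: (E (i, j) (mem_enum _ _)).
Qed.

Lemma card_le_normalized a b (p0 p1 : 'I_a * 'I_b) : p0 != p1 ->
  [set: F] #<= @normalized_mx F a b.
Proof.
move=> p01; pose v (t : F) : 'M[F]_(a, b) := delta_mx p0.1 p0.2 + t *: delta_mx p1.1 p1.2.
have p01E : (p0.1 == p1.1) && (p0.2 == p1.2) = false.
  by rewrite -xpair_eqE -!surjective_pairing (negbTE p01).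
have p10E : (p1.1 == p0.1) && (p1.2 == p0.2) = false.
  by rewrite -xpair_eqE -!surjective_pairing eq_sym (negbTE p01).
have v0 t : v t p0.1 p0.2 = 1 by rewrite !mxE !eqxx /= p01E mulr0 addr0.
have v1 t : v t p1.1 p1.2 = t by rewrite !mxE !eqxx /= p10E mulr1 add0r.
have v_neq0 t : v t != 0 by apply/matrix0Pn; exists p0.1, p0.2; rewrite v0 oner_eq0.
clearbody v.
have nv0 t : mxnormalize (v t) p0.1 p0.2 != 0.
  by rewrite mxE v0 mulr1 invr_eq0 mxlead_eq0.
have nv1 t : mxnormalize (v t) p1.1 p1.2 = t * mxnormalize (v t) p0.1 p0.2.
  by rewrite !mxE v0 v1 mulr1 mulrC.
apply: (@set_inj_card_le _ _ _ _ (fun t => mxnormalize (v t))) => [t _|t s _ _ E].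
  exact: mxnormalize_normalized.
by apply: (mulIf (nv0 s)); rewrite -nv1 -E nv1 E.
Qed.

Lemma card_le_non_outer a b : (1 < a)%N -> (1 < b)%N ->
  [set: F] #<= [set M : 'M[F]_(a, b) | ~ outer_product M].
Proof.
move=> a1 b1.
pose i0 : 'I_a := Ordinal (ltnW a1); pose i1 : 'I_a := Ordinal a1.
pose j0 : 'I_b := Ordinal (ltnW b1); pose j1 : 'I_b := Ordinal b1.
pose M (t : F) : 'M[F]_(a, b) :=
  delta_mx i0 j0 + delta_mx i1 j1 + t *: delta_mx i0 j1.
have M00 t : M t i0 j0 = 1 by rewrite !mxE !eqxx /= mulr0 !addr0.
have M11 t : M t i1 j1 = 1 by rewrite !mxE !eqxx /= mulr0 add0r addr0.
have M10 t : M t i1 j0 = 0 by rewrite !mxE !eqxx /= mulr0 !addr0.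
have M01 t : M t i0 j1 = t by rewrite !mxE !eqxx /= mulr1 !add0r.
apply: (@set_inj_card_le _ _ _ _ M) => [t _ [x [y Mxy]]|t s _ _ E]; last first.
  by rewrite -(M01 t) -(M01 s) E.
have := M10 t; rewrite Mxy outer_mxE => /eqP; rewrite mulf_eq0 => /orP [] /eqP xy0.
  by have := M11 t; rewrite Mxy outer_mxE xy0 mul0r => /eqP; rewrite eq_sym oner_eq0.
by have := M00 t; rewrite Mxy outer_mxE xy0 mulr0 => /eqP; rewrite eq_sym oner_eq0.
Qed.

Lemma scalable_bijection a b a' b' (p0 p1 : 'I_a * 'I_b) (q0 q1 : 'I_a' * 'I_b') :
  p0 != p1 -> q0 != q1 ->
  exists (g : 'M[F]_(a, b) -> 'M[F]_(a', b')) g',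
    [/\ scalable g, scalable g', cancel g g' & cancel g' g].
Proof.
move=> p01 q01.
have : @normalized_mx F a b #= @normalized_mx F a' b'.
  apply: Cantor_Bernstein; apply: card_le_trans (card_leT _) _;
    apply: card_le_trans (card_matrix_le _ _) _.
    exact: card_le_normalized q01.
  exact: card_le_normalized p01.
case/(card_eq_inverse 0 0) => g [g' [gN g'N gK g'K]].
exists (homogenize g), (homogenize g'); split; try exact: homogenize_scalable.
  exact: homogenizeK.
exact: homogenizeK.
Qed.

Lemma non_outer_bijection a b a' b' :
  (1 < a)%N -> (1 < b)%N -> (1 < a')%N -> (1 < b')%N ->
  exists (beta : 'M[F]_(a, b) -> 'M[F]_(a', b')) beta',
    [/\ {homo beta : M / ~ outer_product M}, {homo beta' : M / ~ outer_product M},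
        {in [set M | ~ outer_product M], cancel beta beta'} &
        {in [set M | ~ outer_product M], cancel beta' beta}].
Proof.
move=> a1 b1 a'1 b'1.
have : [set M : 'M[F]_(a, b) | ~ outer_product M] #= [set M : 'M[F]_(a', b') | ~ outer_product M].
  apply: Cantor_Bernstein; apply: card_le_trans (card_leT _) _;
    apply: card_le_trans (card_matrix_le _ _) _; exact: card_le_non_outer.
by case/(card_eq_inverse 0 0) => beta [beta' [? ? ? ?]]; exists beta, beta'.
Qed.

Theorem triple_iso k l m n : (1 < k)%N -> (1 < l)%N -> (1 < m)%N -> (1 < n)%N ->
  exists (th : triple F k l -> triple F m n) (th' : triple F m n -> triple F k l),
    [/\ cancel th th', cancel th' th & {morph th : s t / triple_mul s t}].
Proof.
move=> k1 l1 m1 n1.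
have [g [g' [gZ g'Z gK g'K]]] := @scalable_bijection k 1 m 1
  (Ordinal (ltnW k1), ord0) (Ordinal k1, ord0)
  (Ordinal (ltnW m1), ord0) (Ordinal m1, ord0) isT isT.
have [h [h' [hZ h'Z hK h'K]]] := @scalable_bijection 1 l 1 n
  (ord0, Ordinal (ltnW l1)) (ord0, Ordinal l1)
  (ord0, Ordinal (ltnW n1)) (ord0, Ordinal n1) isT isT.
have [beta [beta' [betaN beta'N betaK beta'K]]] := non_outer_bijection k1 l1 m1 n1.
exists (fun t => (g t.1.1, h t.1.2, outer_extend g h beta t.2)),
       (fun t => (g' t.1.1, h' t.1.2, outer_extend g' h' beta' t.2)); split.
- by move=> [[x y] A] /=; rewrite gK hK outer_extendK.
- by move=> [[x y] A] /=; rewrite g'K h'K outer_extendK.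
- move=> [[x y] A] [[x' y'] A']; rewrite /triple_mul /= outer_extendM //.
  by rewrite (scalable0 gZ) (scalable0 hZ).
Qed.

End InfiniteField.

(** * Flags of signature (k, 1, l) *)

Lemma phi_flag3 (F : fieldType) (N : nat) (V0 V1 V2 V3 : 'M[F]_N) a :
  (V0 == (0 : 'M[F]_N))%MS -> (V3 == 1%:M)%MS ->
  phi [:: V0; V1; V2; V3] a <->
  [/\ V1 *m a^T = 0, (V2 *m a^T <= V1)%MS & (a^T <= V2)%MS].
Proof.
move=> /eqmxP V0E /eqmxP V3E; rewrite /phi; split.
  move=> Va; split; [apply/eqP; rewrite -submx0 -V0E; exact: (Va 1%N) | exact: (Va 2%N) |].
  by rewrite -(mul1mx a^T) -(eqmxMr _ V3E); exact: (Va 3%N).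
case=> V1a V2a V3a [|[|[|[|i]]]] //= _; first by rewrite V0E V1a sub0mx.
by rewrite (eqmxMr _ V3E) mul1mx.
Qed.

Section FlagBasis.
Variables (F : fieldType) (k l : nat).
Local Notation N := (k + l + 1)%N.
Variables (B1 : 'M[F]_(k, N)) (B3 : 'M[F]_(l, N)) (e : 'M[F]_(1, N)).
Let P : 'M[F]_N := col_mx (col_mx B1 B3) e.
Hypothesis P_unit : P \in unitmx.

Lemma mul_row_basis r (x : 'M[F]_(r, k)) (y : 'M[F]_(r, l)) (z : 'M[F]_(r, 1)) :
  row_mx (row_mx x y) z *m P = x *m B1 + y *m B3 + z *m e.
Proof. by rewrite /P !mul_row_col. Qed.

Lemma submx_B1P r (M : 'M[F]_(r, N)) :
  (M <= B1)%MS <-> exists x, M *m invmx P = row_mx (row_mx x 0) 0.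
Proof.
split.
  case/submxP=> D ->; exists D.
  have -> : B1 = row_mx (row_mx 1%:M 0) 0 *m P by rewrite mul_row_basis !mul0mx !addr0 mul1mx.
  by rewrite mulmxA mulmxK // !mul_mx_row !mulmx0 mulmx1.
case=> x /(congr1 (mulmx^~ P)); rewrite mulmxKV // mul_row_basis !mul0mx !addr0 => ->.
exact: submxMl.
Qed.

Lemma submx_B1eP r (M : 'M[F]_(r, N)) :
  (M <= col_mx B1 e)%MS <-> exists x z, M *m invmx P = row_mx (row_mx x 0) z.
Proof.
split.
  case/submxP=> D ->; exists (lsubmx D), (rsubmx D).
  rewrite -{1}[D]hsubmxK mul_row_col.
  have -> : lsubmx D *m B1 + rsubmx D *m e =
      row_mx (row_mx (lsubmx D) 0) (rsubmx D) *m P.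
    by rewrite mul_row_basis mul0mx addr0.
  by rewrite mulmxK.
case=> x [z] /(congr1 (mulmx^~ P)); rewrite mulmxKV // mul_row_basis mul0mx addr0 => ->.
by rewrite -mul_row_col submxMl.
Qed.

Lemma flag_stableP (b : 'M[F]_N) :
  [/\ B1 *m b = 0, (e *m b <= B1)%MS & (B3 *m b <= col_mx B1 e)%MS] <->
  exists t, P *m b *m invmx P = triple_mx t.
Proof.
have Pb : P *m b *m invmx P =
    col_mx (col_mx (B1 *m b *m invmx P) (B3 *m b *m invmx P)) (e *m b *m invmx P).
  by rewrite /P !mul_col_mx.
split.
  case=> B1b /submx_B1P [x ex] /submx_B1eP [y [z B3yz]].
  by exists (x^T, z^T, y^T); rewrite Pb B1b mul0mx ex B3yz /triple_mx /= !trmxK.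
case=> t; rewrite Pb /triple_mx => /eq_col_mx [/eq_col_mx [B1b B3b] eb].
split.
- by apply: (can_inj (mulmxKV P_unit)); rewrite B1b mul0mx.
- by apply/submx_B1P; eexists; exact: eb.
- by apply/submx_B1eP; do 2 eexists; exact: B3b.
Qed.

Lemma flag_conditionsE (V1 V2 : 'M[F]_N) (b : 'M[F]_N) :
  (V1 :=: B1)%MS -> (V2 :=: col_mx B1 e)%MS ->
  [/\ V1 *m b = 0, (V2 *m b <= V1)%MS & (b <= V2)%MS] <->
  [/\ B1 *m b = 0, (e *m b <= B1)%MS & (B3 *m b <= col_mx B1 e)%MS].
Proof.
move=> V1E V2E.
have V1b : (V1 *m b == 0) = (B1 *m b == 0) by rewrite -!submx0 (eqmxMr _ V1E).
have V2b : (V2 *m b <= V1)%MS = (col_mx (B1 *m b) (e *m b) <= B1)%MS.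
  by rewrite (eqmxMr _ V2E) V1E mul_col_mx.
have V2sub : (b <= V2)%MS = (P *m b <= col_mx B1 e)%MS.
  by rewrite V2E (eqmxMfull _ (_ : row_full P)) // row_full_unit.
split.
  case=> /eqP; rewrite V1b => /eqP B1b; rewrite V2b col_mx_sub => /andP [_ eb].
  by rewrite V2sub /P !mul_col_mx !col_mx_sub => /andP [/andP [_ B3b] _].
case=> B1b eb B3b; split.
- by apply/eqP; rewrite V1b B1b.
- by rewrite V2b col_mx_sub B1b sub0mx.
rewrite V2sub /P !mul_col_mx !col_mx_sub B1b sub0mx B3b /=.
by apply: submx_trans eb _; rewrite -addsmxE addsmxSl.
Qed.

Lemma phi_flag_coord (V0 V1 V2 V3 : 'M[F]_N) :
  (V0 == (0 : 'M[F]_N))%MS -> (V3 == 1%:M)%MS -> (V1 :=: B1)%MS -> (V2 :=: col_mx B1 e)%MS ->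
  forall a, phi [:: V0; V1; V2; V3] a <-> exists t, a = flag_coord P t.
Proof.
move=> V0E V3E V1E V2E a.
apply: (iff_trans (phi_flag3 _ _ _ V0E V3E)); apply: (iff_trans (flag_conditionsE _ V1E V2E)).
apply: (iff_trans (flag_stableP _)); split=> -[t Et]; exists t.
  by rewrite /flag_coord -Et !mulmxA mulVmx // mul1mx mulmxKV // trmxK.
by rewrite Et /flag_coord trmxK !mulmxA mulmxK // mulmxV // mul1mx.
Qed.

End FlagBasis.

Section FlagShape.
Variables (F : fieldType) (k l : nat).
Local Notation N := (k + l + 1)%N.

Lemma flag_signature3 (V : seq 'M[F]_N) :
  is_flag V -> flag_signature V = [:: k; 1; l]%N ->
  exists V0 V1 V2 V3, [/\ V = [:: V0; V1; V2; V3], (V0 == (0 : 'M[F]_N))%MS,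
    (V3 == 1%:M)%MS, (V1 <= V2)%MS & \rank V1 = k /\ \rank V2 = k.+1].
Proof.
case=> _ V0E V3E Vlt Vsig; have := congr1 size Vsig.
rewrite size_map size_iota.
case: V V0E V3E Vlt Vsig => [|V0 [|V1 [|V2 [|V3 [|]]]]] //= V0E V3E Vlt [r1 r2 _] _.
exists V0, V1, V2, V3; split => //; first by apply: ltmxW; exact: (Vlt 1%N).
move: r1 r2; rewrite (eqmx_rank V0E) mxrank0 subn0 => rk1.
by rewrite rk1; split => //; lia.
Qed.

Lemma adapted_basis (V1 V2 : 'M[F]_N) :
  (V1 <= V2)%MS -> \rank V1 = k -> \rank V2 = k.+1 ->
  exists (B1 : 'M[F]_(k, N)) (B3 : 'M[F]_(l, N)) (e : 'M[F]_(1, N)),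
    [/\ col_mx (col_mx B1 B3) e \in unitmx, (V1 :=: B1)%MS & (V2 :=: col_mx B1 e)%MS].
Proof.
move=> V12 rk1 rk2.
have rkD : \rank (V2 :\: V1)%MS = 1%N.
  have := mxrank_cap_compl V2 V1.
  by rewrite (capmx_idPr V12) rk1 rk2; lia.
have rkC : \rank (V2^C)%MS = l by rewrite mxrank_compl rk2; lia.
pose B1 : 'M[F]_(k, N) := castmx (rk1, erefl N) (row_base V1).
pose e : 'M[F]_(1, N) := castmx (rkD, erefl N) (row_base (V2 :\: V1)%MS).
pose B3 : 'M[F]_(l, N) := castmx (rkC, erefl N) (row_base (V2^C)%MS).
have B1E : (B1 :=: V1)%MS := eqmx_trans (eqmx_cast _ _) (eq_row_base V1).
have eE : (e :=: V2 :\: V1)%MS := eqmx_trans (eqmx_cast _ _) (eq_row_base _).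
have B3E : (B3 :=: V2^C)%MS := eqmx_trans (eqmx_cast _ _) (eq_row_base _).
have V2E : (col_mx B1 e :=: V2)%MS.
  apply: eqmx_trans (eqmx_sym (addsmxE _ _)) _.
  apply: eqmx_trans (adds_eqmx B1E eE) _; rewrite addsmxC.
  apply: eqmx_trans _ (addsmx_diff_cap_eq V2 V1).
  by apply: adds_eqmx => //; exact: eqmx_sym (capmx_idPr V12).
exists B1, B3, e; split; [|exact: eqmx_sym|exact: eqmx_sym].
rewrite -row_full_unit -sub1mx.
apply: submx_trans (_ : 1%:M <= V2 + V2^C)%MS _; first by rewrite sub1mx addsmx_compl_full.
have col_mxS m1 m2 (A : 'M[F]_(m1, N)) (B : 'M[F]_(m2, N)) :
    (A <= col_mx A B)%MS && (B <= col_mx A B)%MS.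
  by rewrite -!addsmxE addsmxSl addsmxSr.
have /andP [S1 S3] := col_mxS _ _ B1 B3; have /andP [S13 Se] := col_mxS _ _ (col_mx B1 B3) e.
by rewrite addsmx_sub -V2E -B3E col_mx_sub (submx_trans S1 S13) Se (submx_trans S3 S13).
Qed.

End FlagShape.

Lemma semigroup_iso_param (F : fieldType) N1 N2 (X Y : Type)
    (mulX : X -> X -> X) (mulY : Y -> Y -> Y)
    (S : 'M[F]_N1 -> Prop) (S' : 'M[F]_N2 -> Prop) (p : X -> 'M[F]_N1) (q : Y -> 'M[F]_N2)
    (th : X -> Y) (th' : Y -> X) (x0 : X) :
  (forall a, S a <-> exists t, a = p t) -> (forall b, S' b <-> exists t, b = q t) ->
  injective p -> injective q ->
  {morph p : s t / mulX s t >-> s *m t} -> {morph q : s t / mulY s t >-> s *m t} ->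
  cancel th th' -> cancel th' th -> {morph th : s t / mulX s t >-> mulY s t} ->
  semigroup_iso S S'.
Proof.
move=> SP S'P p_inj q_inj pM qM thK th'K thM.
have /choice [pinv pinvK] : forall a, exists t, S a -> a = p t.
  by move=> a; have [/SP [t ->]|] := pselect (S a); [exists t | exists x0].
have pK t : pinv (p t) = t by apply: p_inj; rewrite -pinvK //; apply/SP; exists t.
exists (fun a => q (th (pinv a))); split.
- by move=> a _; apply/S'P; eexists.
- by move=> a b Sa Sb /q_inj /(can_inj thK) ab; rewrite (pinvK a) // (pinvK b) // ab.
- by move=> c /S'P [t ->]; exists (p (th' t)); [apply/SP; eexists | rewrite pK th'K].
- by move=> a b Sa Sb; rewrite (pinvK a) // (pinvK b) // -pM !pK thM qM.
Qed.

Theorem proposition15 (F : fieldType) (HF : infinite_field F) (k l m n : nat)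
  (hk : (1 < k)%N) (hl : (1 < l)%N) (hm : (1 < m)%N) (hn : (1 < n)%N)
  (V : seq 'M[F]_(k + l + 1)) (W : seq 'M[F]_(m + n + 1)) :
  is_flag V -> flag_signature V = [:: k; 1; l]%N ->
  is_flag W -> flag_signature W = [:: m; 1; n]%N ->
  semigroup_iso (phi V) (phi W).
Proof.
move=> Vflag Vsig Wflag Wsig.
have [V0 [V1 [V2 [V3 [-> V0E V3E V12 [rkV1 rkV2]]]]]] := flag_signature3 Vflag Vsig.
have [W0 [W1 [W2 [W3 [-> W0E W3E W12 [rkW1 rkW2]]]]]] := flag_signature3 Wflag Wsig.
have [B1 [B3 [e [PV_unit V1E V2E]]]] := @adapted_basis F k l _ _ V12 rkV1 rkV2.
have [C1 [C3 [e' [PW_unit W1E W2E]]]] := @adapted_basis F m n _ _ W12 rkW1 rkW2.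
have [th [th' [thK th'K thM]]] := triple_iso HF hk hl hm hn.
apply: (semigroup_iso_param (0, 0, 0) (phi_flag_coord PV_unit V0E V3E V1E V2E)
  (phi_flag_coord PW_unit W0E W3E W1E W2E) (flag_coord_inj PV_unit) (flag_coord_inj PW_unit)
  _ _ thK th'K thM) => s t; exact/esym/flag_coordM.
Qed.
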